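(* Let $x$ be a grid function with $x_s\neq0$ at every node that satisfies the scheme (S) with $\check B=\frac{2(\cos\tau-1)}{\tau^2}\,x$ (discretization for the parabolic bottom $b(x)=-x^2/2$). Then at every node $$\Big(x_t\sin t-x\,\frac{\sin\hat t-\sin t}{\tau}\Big)_{\check t}+\Big(\sin t\,\big((\hat x_s\check x_s)^{-1}-\alpha^2x_s\big)\Big)_{\bar s}=0,$$ where $t$ is the time coordinate of the node and $\hat t=t+\tau$.
   Context: Fix mesh steps $\tau>0$, $h>0$ and a constant $\alpha\in\mathbb R$. A grid function is a real-valued function $f=f(t,s)$ on the uniform orthogonal mesh $\{(n\tau,kh): n,k\in\mathbb Z\}$; at the node $(n\tau,kh)$ the symbol $t$ denotes the number $n\tau$. Shifts: $\hat f=f(t+\tau,s)$, $\check f=f(t-\tau,s)$, $f_+=f(t,s+h)$, $f_-=f(t,s-h)$; a shift applied to a composite expression shifts the whole expression, including explicit occurrences of $t$ (e.g. $\hat x_s$ is $x_s$ evaluated at $(t+\tau,s)$). Differences: $f_t=(\hat f-f)/\tau$, $f_{\check t}=(f-\check f)/\tau$, $f_s=(f_+-f)/h$, $f_{\bar s}=(f-f_-)/h$; iterated differences compose, e.g. $x_{t\check t}=(x_t)_{\check t}=(\hat x-2x+\check x)/\tau^2$ and $x_{s\bar s}=(x_s)_{\bar s}=(x_+-2x+x_-)/h^2$. Given a grid function $x$ with $x_s\neq0$ everywhere and a grid function $\check B$ (an approximation of the bottom-slope term), the scheme (S) is the requirement that at every node $$x_{t\check t}-\alpha^2x_{s\bar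 s}+\Big(\frac{1}{\hat x_s\check x_s}\Big)_{\bar s}-\check B=0 .$$ *)

From Stdlib Require Import Reals ZArith.
Open Scope R_scope.

(* A grid function on the mesh {(n tau, k h) : n,k in Z} is represented
   by its values at integer indices: f n k = f(n tau, k h). *)
Definition grid := Z -> Z -> R.

Definition hat   (f : grid) : grid := fun n k => f (n + 1)%Z k.
Definition check (f : grid) : grid := fun n k => f (n - 1)%Z k.
Definition splus (f : grid) : grid := fun n k => f n (k + 1)%Z.
Definition sminus (f : grid) : grid := fun n k => f n (k - 1)%Z.

Definition d_t    (tau : R) (f : grid) : grid := fun n k => (hat f n k - f n k) / tau.
Definition d_tb   (tau : R) (f : grid) : grid := fun n k => (f n k - check f n k) / tau.
Definition d_s    (h : R) (f : grid) : grid := fun n k => (splus f n k - f n k) / h.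
Definition d_sb   (h : R) (f : grid) : grid := fun n k => (f n k - sminus f n k) / h.

Definition tgrid (tau : R) : grid := fun n _ => IZR n * tau.

Definition scheme (tau h alpha : R) (x Bc : grid) : Prop :=
  forall n k,
    d_tb tau (d_t tau x) n k - alpha ^ 2 * d_sb h (d_s h x) n k
    + d_sb h (fun n' k' => / (hat (d_s h x) n' k' * check (d_s h x) n' k')) n k
    - Bc n k = 0.

From Stdlib Require Import Reals ZArith Lra.
Open Scope R_scope.

(* The conservation law is the scheme (S) multiplied by sin t.

   - Time part: for any grid function g, the backward difference of the
     discrete Wronskian flux  x_t g - x g_t  equals  g x_{t t'} - x g_{t t'}
     (a summation-by-parts identity).  The grid function g = sin t solves
     the discrete oscillator  g_{t t'} = 2 (cos tau - 1)/tau^2 g, because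
     sin (t + tau) + sin (t - tau) = 2 cos tau sin t.  Hence the time part
     of the law is  sin t (x_{t t'} - B-check).
   - Space part: sin t does not depend on s, so it factors out of the
     backward s-difference, which is linear.
   Adding both parts gives  sin t  times the residual of (S), i.e. zero. *)

Lemma discrete_wronskian (tau lam : R) (x g : grid) (n k : Z) :
  tau <> 0 ->
  d_tb tau (d_t tau g) n k = lam * g n k ->
  d_tb tau
    (fun n' k' => d_t tau x n' k' * g n' k'
                  - x n' k' * (hat g n' k' - g n' k') / tau) n k
  = g n k * (d_tb tau (d_t tau x) n k - lam * x n k).
Proof.
  intros Htau Hosc.
  transitivity (g n k * d_tb tau (d_t tau x) n k
                - x n k * d_tb tau (d_t tau g) n k).
  - unfold d_tb, d_t, hat, check.
    rewrite Z.sub_add.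
    field; exact Htau.
  - rewrite Hosc; ring.
Qed.

Lemma sin_time_discrete_oscillator (tau : R) (n k : Z) :
  tau <> 0 ->
  d_tb tau (d_t tau (fun n' k' => sin (tgrid tau n' k'))) n k
  = 2 * (cos tau - 1) / tau ^ 2 * sin (tgrid tau n k).
Proof.
  intros Htau.
  unfold d_tb, d_t, hat, check, tgrid.
  rewrite Z.sub_add, plus_IZR, minus_IZR.
  replace ((IZR n + 1) * tau) with (IZR n * tau + tau) by ring.
  replace ((IZR n - 1) * tau) with (IZR n * tau - tau) by ring.
  rewrite sin_plus, sin_minus.
  field; exact Htau.
Qed.

Lemma d_sb_time_coefficient (h c : R) (a : Z -> R) (f g : grid) (n k : Z) :
  h <> 0 ->
  d_sb h (fun n' k' => a n' * (f n' k' - c * g n' k')) n k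
  = a n * (d_sb h f n k - c * d_sb h g n k).
Proof.
  intros Hh.
  unfold d_sb, sminus.
  field; exact Hh.
Qed.

Theorem mainTheorem7 (tau h alpha : R) (x : grid) :
  0 < tau -> 0 < h ->
  (forall n k, d_s h x n k <> 0) ->
  scheme tau h alpha x
    (fun n k => 2 * (cos tau - 1) / tau ^ 2 * x n k) ->
  forall n k,
    d_tb tau
      (fun n' k' =>
         d_t tau x n' k' * sin (tgrid tau n' k')
         - x n' k' * (sin (hat (tgrid tau) n' k') - sin (tgrid tau n' k')) / tau)
      n k
    + d_sb h
      (fun n' k' =>
         sin (tgrid tau n' k')
         * (/ (hat (d_s h x) n' k' * check (d_s h x) n' k')
            - alpha ^ 2 * d_s h x n' k'))
      n k
    = 0.
Proof.
  intros Htau Hh _ Hscheme n k.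
  assert (Htau0 : tau <> 0) by lra.
  assert (Hh0 : h <> 0) by lra.
  pose proof (discrete_wronskian tau (2 * (cos tau - 1) / tau ^ 2) x
                (fun n' k' => sin (tgrid tau n' k')) n k Htau0
                (sin_time_discrete_oscillator tau n k Htau0)) as Htime.
  pose proof (d_sb_time_coefficient h (alpha ^ 2) (fun n' => sin (tgrid tau n' 0%Z))
                (fun n' k' => / (hat (d_s h x) n' k' * check (d_s h x) n' k'))
                (d_s h x) n k Hh0) as Hspace.
  pose proof (Hscheme n k) as Hres.
  (* The time and space parts are sin t times the corresponding parts of
     the residual of (S) at (n, k). *)
  unfold hat, tgrid in Htime, Hspace, Hres |- *.
  cbv beta in Htime, Hspace |- *.
  rewrite Htime, Hspace, <- (Rmult_0_r (sin (IZR n * tau))), <- Hres.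
  ring.
Qed.
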